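(* Let $\mathbb{F}$ be a field of characteristic $2$, $V$ an $n$-dimensional $\mathbb{F}$-vector space and $b$ a non-degenerate symmetric bilinear form on $V$ with attached quadratic form $Q: x\mapsto b(x,x)$. Assume that $\operatorname{Ker} Q$ is totally $b$-singular, and set $\nu := \dim \operatorname{Ker} Q$. Let $\mathcal{V}$ be a linear subspace of $\mathcal{S}_b$ (respectively, of $\mathcal{A}_b$) all of whose elements are nilpotent. Then $\dim \mathcal{V} \le \nu(n-\nu)$ (respectively, $\dim \mathcal{V} \le \nu(n-\nu-1)$).
   Context: $\operatorname{Ker} Q = \{x\in V : Q(x)=0\}$, a linear subspace in characteristic $2$. A subspace $X$ is totally $b$-singular if $b(x,y)=0$ for all $x,y\in X$. $\mathcal{S}_b$ (resp. $\mathcal{A}_b$) is the space of endomorphisms $u$ of $V$ for which $(x,y)\mapsto b(x,u(y))$ is symmetric (resp. alternating, i.e. vanishes on all pairs $(x,x)$). *)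

From HB Require Import structures.
From mathcomp Require Import all_boot all_order all_algebra.
Set Implicit Arguments. Unset Strict Implicit. Unset Printing Implicit Defensive.
Import GRing.Theory.
Local Open Scope ring_scope.

(* Vectors of V = F^n are row vectors 'rV[F]_n; an endomorphism u of V is
   represented by a matrix M acting on the right: u(y) = y *m M. *)
Definition bform (F : fieldType) (n : nat) (B : 'M[F]_n) (x y : 'rV[F]_n) : F :=
  (x *m B *m y^T) 0 0.

Definition qform (F : fieldType) (n : nat) (B : 'M[F]_n) (x : 'rV[F]_n) : F :=
  bform B x x.

Definition in_Sb (F : fieldType) (n : nat) (B M : 'M[F]_n) : Prop :=
  forall x y : 'rV[F]_n, bform B x (y *m M) = bform B y (x *m M).

Definition in_Ab (F : fieldType) (n : nat) (B M : 'M[F]_n) : Prop :=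
  forall x : 'rV[F]_n, bform B x (x *m M) = 0.

Definition mx_nilpotent (F : fieldType) (n : nat) (M : 'M[F]_n) : Prop :=
  exists k : nat, M ^+ k = 0.

(* Write K^⊥ for the b-orthogonal of K = Ker Q.  For a nilpotent u in S_b and y in K^⊥ we have
   Q(y u^k) = b(y, y u^(2k)), so a descending induction on k gives K^⊥ u ⊆ K; as K ⊆ K^⊥, a
   nilpotent space W ⊆ S_b stabilises K.  A Gerstenhaber-type bound for nilpotent spaces
   stabilising a ν-dimensional subspace gives dim W <= C(ν,2) + dim (W ∩ ann K).  Modulo
   ann K^⊥, an element of ann K is determined by the map K^⊥/K -> K it induces, so this
   costs at most (n - 2ν)ν; an element of ann K^⊥ is determined by the Gram matrix of
   (x, y) |-> b(x, y u) on a ν-dimensional complement of K^⊥, which is symmetric, and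
   alternating when u is in A_b.  Finally C(ν,2) + (n-2ν)ν + C(ν+1,2) = ν(n-ν) and
   C(ν,2) + (n-2ν)ν + C(ν,2) = ν(n-ν-1). *)

From HB Require Import structures.
From mathcomp Require Import all_boot all_order all_algebra zify.
Import GRing.Theory.
Local Open Scope ring_scope.
Set Implicit Arguments. Unset Strict Implicit. Unset Printing Implicit Defensive.

Section LinearAlgebraFacts.
Variable F : fieldType.

Lemma hom_of_linear (U V : vectType F) (f : U -> V) :
  linear f -> {g : 'Hom(U, V) | g =1 f}.
Proof.
move=> lin_f; pose fL : {linear U -> V} := HB.pack f (GRing.isLinear.Build _ _ _ _ f lin_f).
by exists (linfun fL) => x; rewrite lfunE.
Qed.

Lemma dimv_mx_le p q (X : {vspace 'M[F]_(p, q)}) : (\dim X <= p * q)%N.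
Proof. by rewrite (leq_trans (dimvS (subvf X))) // dimvf /dim. Qed.

Lemma mx11_eq0 (M : 'M[F]_1) : (M == 0) = (M 0 0 == 0).
Proof.
by apply/eqP/eqP => [-> | M0]; [rewrite mxE | apply/matrixP => i j; rewrite !ord1 M0 mxE].
Qed.

Lemma mulmx_col_mxE m p (y : 'rV[F]_m) (M : 'M[F]_(m, p)) j :
  (y *m col j M) 0 0 = (y *m M) 0 j.
Proof. by rewrite colE mulmxA -colE mxE. Qed.

End LinearAlgebraFacts.

Section RowSpaces.
Variables (F : fieldType) (e : nat).
Implicit Types U Y Z : {vspace 'rV[F]_e}.

Definition vbasis_mx U : 'M[F]_(\dim U, e) := \matrix_(i < \dim U) (vbasis U)`_i.

Lemma row_vbasis_mx U i : row i (vbasis_mx U) = (vbasis U)`_i.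
Proof. exact: rowK. Qed.

Lemma vbasis_nth_mem U (i : 'I_(\dim U)) : (vbasis U)`_i \in U.
Proof. by rewrite vbasis_mem // mem_nth // size_tuple. Qed.

Lemma vbasis_mx_mul_eq0 U p (M : 'M[F]_(e, p)) :
  reflect (forall y, y \in U -> y *m M = 0) (vbasis_mx U *m M == 0).
Proof.
apply: (iffP eqP) => [UM0 y yU | yM0].
  rewrite (coord_vbasis yU) mulmx_suml big1 // => i _.
  by rewrite -scalemxAl -row_vbasis_mx -row_mul UM0 row0 scaler0.
by apply/row_matrixP => i; rewrite row_mul row_vbasis_mx row0 yM0 ?vbasis_nth_mem.
Qed.

Lemma vbasis_mx_rinv U : exists Z : 'M[F]_(e, \dim U), vbasis_mx U *m Z = 1%:M.
Proof.
pose d := [seq delta_mx 0 i : 'rV[F]_(\dim U) | i <- enum 'I_(\dim U)].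
have [f /(_ (basis_free (vbasisP U))) fX] := linear_of_free (vbasis U) d.
exists (lin1_mx f); apply/row_matrixP => i.
have /fX/(congr1 (fun s => nth 0 s i)) : size d = size (vbasis U).
  by rewrite size_map size_enum_ord size_tuple.
rewrite row_mul row_vbasis_mx row1 mul_rV_lin1 (nth_map 0) ?size_tuple //.
by rewrite /d (nth_map i) ?size_enum_ord // nth_ord_enum.
Qed.

Lemma vbasis_mx_rinvK U (R : 'M[F]_(e, \dim U)) y :
  vbasis_mx U *m R = 1%:M -> y \in U -> y *m R *m vbasis_mx U = y.
Proof.
move=> UR /coord_vbasis ->; rewrite !mulmx_suml; apply: eq_bigr => i _.
by rewrite -!scalemxAl -row_vbasis_mx -row_mul UR row1 -rowE.
Qed.

Definition annv U : {vspace 'M[F]_e} := lker (linfun (mulmx (vbasis_mx U))).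

Lemma annvP U M : reflect (forall y, y \in U -> y *m M = 0) (M \in annv U).
Proof. by rewrite memv_ker lfunE; apply: vbasis_mx_mul_eq0. Qed.

Definition orthv (A : 'M[F]_e) U : {vspace 'rV[F]_e} :=
  lker (linfun (mulmxr (A *m (vbasis_mx U)^T))).

Lemma orthvP A U y : reflect (forall u, u \in U -> bform A y u = 0) (y \in orthv A U).
Proof.
rewrite memv_ker lfunE /= mulmxA -trmx_eq0 trmx_mul trmxK.
apply: (iffP (vbasis_mx_mul_eq0 _ _)) => [yA0 u /yA0 | yA0 u /yA0].
  by move/eqP; rewrite -trmx_eq0 trmx_mul trmxK mx11_eq0 => /eqP.
by move=> b0; apply/eqP; rewrite -trmx_eq0 trmx_mul trmxK mx11_eq0; apply/eqP.
Qed.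

Lemma dim_orthv A U : A \in unitmx -> \dim (orthv A U) = (e - \dim U)%N.
Proof.
move=> unitA; rewrite /orthv; set f := linfun _.
have [R UR] := vbasis_mx_rinv U.
have surj_f : (f @: fullv)%VS = fullv.
  apply/eqP; rewrite eqEsubv subvf /=; apply/subvP => w _.
  have -> : w = f (w *m R^T *m invmx A).
    by rewrite lfunE /= !mulmxA mulmxKV // -mulmxA -trmx_mul UR trmx1 mulmx1.
  exact/memv_img/memvf.
have := limg_ker_dim f fullv; rewrite surj_f capfv !dimvf /dim /= !mul1n.
move=> dimf; apply/eqP; rewrite -(eqn_add2r (\dim U)) subnK; first exact/eqP.
by rewrite -[X in (_ <= X)%N]dimf leq_addl.
Qed.

Lemma dimv_orth_le A Y Z : A \in unitmx ->
  (forall y z, y \in Y -> z \in Z -> bform A y z = 0) -> (\dim Y + \dim Z <= e)%N.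
Proof.
move=> unitA YZ.
have /dimvS : (Y <= orthv A Z)%VS by apply/subvP => y yY; apply/orthvP => z /(YZ y z yY).
rewrite dim_orthv // => leY.
by move: leY (dimv_mx_le Z); rewrite mul1n; lia.
Qed.

End RowSpaces.

Section BilinearForm.
Variables (F : fieldType) (n : nat) (B : 'M[F]_n).

Lemma bformDl x y z : bform B (x + y) z = bform B x z + bform B y z.
Proof. by rewrite /bform !mulmxDl mxE. Qed.

Lemma bformDr x y z : bform B x (y + z) = bform B x y + bform B x z.
Proof. by rewrite /bform linearD mulmxDr mxE. Qed.

Lemma bformZl c x y : bform B (c *: x) y = c * bform B x y.
Proof. by rewrite /bform -!scalemxAl mxE. Qed.

Lemma bformZr c x y : bform B x (c *: y) = c * bform B x y.
Proof. by rewrite /bform linearZ -scalemxAr mxE. Qed.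

Lemma bform0l y : bform B 0 y = 0.
Proof. by rewrite /bform !mul0mx mxE. Qed.

Lemma bform0r x : bform B x 0 = 0.
Proof. by rewrite /bform trmx0 mulmx0 mxE. Qed.

Lemma bform_suml I (r : seq I) (P : pred I) (f : I -> 'rV[F]_n) y :
  bform B (\sum_(i <- r | P i) f i) y = \sum_(i <- r | P i) bform B (f i) y.
Proof. by elim/big_rec2: _ => [|i x1 x2 _ <-]; rewrite ?bform0l ?bformDl. Qed.

Lemma bform_sumr I (r : seq I) (P : pred I) (f : I -> 'rV[F]_n) x :
  bform B x (\sum_(i <- r | P i) f i) = \sum_(i <- r | P i) bform B x (f i).
Proof. by elim/big_rec2: _ => [|i y1 y2 _ <-]; rewrite ?bform0r ?bformDr. Qed.

Lemma bform_nondeg z : B \in unitmx -> (forall x, bform B x z = 0) -> z = 0.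
Proof.
move=> unitB z0; apply: trmx_inj; rewrite trmx0 -(mulKmx unitB z^T).
suff -> : B *m z^T = 0 by rewrite mulmx0.
apply/colP => i; rewrite [RHS]mxE -(z0 (delta_mx 0 i)) /bform -mulmxA -rowE.
by rewrite [RHS]mxE.
Qed.

Lemma Ab_Sb M : 2%N \in [pchar F] -> in_Ab B M -> in_Sb B M.
Proof.
move=> char2 altM x y; have := altM (x + y).
rewrite mulmxDl !bformDl !bformDr !altM add0r addr0 => /eqP.
by rewrite addr_eq0 oppr_pchar2 // => /eqP.
Qed.

Hypothesis symB : B^T = B.

Lemma bformC x y : bform B x y = bform B y x.
Proof.
rewrite /bform -[in RHS](trmxK (y *m B *m x^T)) [RHS]mxE.
by rewrite !trmx_mul trmxK symB mulmxA.
Qed.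

Lemma Sb_adj M x y : in_Sb B M -> bform B (x *m M) y = bform B x (y *m M).
Proof. by move=> symM; rewrite bformC symM. Qed.

Lemma Sb_adjX M k x y : in_Sb B M -> bform B (x *m M ^+ k) y = bform B x (y *m M ^+ k).
Proof.
move=> symM; elim: k x y => [|k IHk] x y; first by rewrite expr0 !mulmx1.
by rewrite {1}exprSr exprS -!mulmxE !mulmxA Sb_adj // IHk.
Qed.

End BilinearForm.

Lemma finsupp_conv_recursion_eq0 (F : fieldType) (a h : nat -> F) N :
    (forall m, (N <= m)%N -> a m = 0) -> (forall m, (N <= m)%N -> h m = 0) ->
    (forall m, a m = h m + \sum_(i < m) a i * h (m - i.+1)%N) ->
  forall m, h m = 0.
Proof.
move=> aN hN rec.
pose pa := \poly_(i < N) a i; pose ph := \poly_(i < N) h i.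
have coef_pa m : pa`_m = a m by rewrite coef_poly; case: ltnP => // /aN.
have coef_ph m : ph`_m = h m by rewrite coef_poly; case: ltnP => // /hN.
have pa_eq : pa = ph + 'X * (pa * ph).
  apply/polyP => -[|m]; rewrite coefD coefXM coef_pa coef_ph rec ?big_ord0 //=.
  by rewrite coefM; congr (_ + _); apply: eq_bigr => i _; rewrite coef_pa coef_ph subSS.
suff /eqP ph0 : ph == 0 by move=> m; rewrite -coef_ph ph0 coef0.
apply: contraT => ph_neq0.
have pa_neq0 : pa != 0.
  by apply: contra ph_neq0 => /eqP pa0; move: pa_eq; rewrite pa0 mul0r mulr0 addr0 => <-.
have pa_gt0 : (0 < size pa)%N by rewrite size_poly_gt0.
have size_pa : size pa = (size pa + size ph)%N.
  rewrite {1}pa_eq addrC size_addl mulrC size_mulX ?mulf_neq0 // size_mul //.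
    by rewrite prednK // addn_gt0 pa_gt0.
  by rewrite prednK ?addn_gt0 ?pa_gt0 // -{1}[size ph]add0n ltn_add2r.
move/eqP: size_pa; rewrite -{1}[size pa]addn0 eqn_add2l eq_sym size_poly_eq0.
by rewrite (negbTE ph_neq0).
Qed.

Section NilpotentStabilizer.
Variables (F : fieldType) (n : nat).
Implicit Types (U : {vspace 'rV[F]_n}) (W : {vspace 'M[F]_n}).

Lemma mx_nilpotentP (M : 'M[F]_n) :
  mx_nilpotent M -> exists N, forall m, (N <= m)%N -> M ^+ m = 0.
Proof. by case=> N MN; exists N => m /subnK <-; rewrite exprD MN mulr0. Qed.

Lemma stab_mulmxX U M k y : (forall x, x \in U -> x *m M \in U) ->
  y \in U -> y *m M ^+ k \in U.
Proof.
move=> stabM; elim: k y => [|k IHk] y yU; first by rewrite expr0 mulmx1.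
by rewrite exprSr -mulmxE mulmxA stabM ?IHk.
Qed.

Section HyperplaneStep.
Variables (U : {vspace 'rV[F]_n}) (W : {vspace 'M[F]_n}).
Hypothesis nilW : forall u, u \in W -> mx_nilpotent u.
Hypothesis stabW : forall u y, u \in W -> y \in U -> y *m u \in U.
Variables (x0 : 'rV[F]_n) (j : 'I_n).
Hypotheses (x0U : x0 \in U) (x0j : x0 0 j = 1).

Let H := (U :&: lker (linfun (col j)))%VS.
Let Lz := linfun (trmx \o mulmx (vbasis_mx H) \o col j).

Lemma mem_hyperplane y : (y \in H) = (y \in U) && (y 0 j == 0).
Proof. by rewrite memv_cap memv_ker lfunE mx11_eq0 mxE. Qed.

Lemma dim_hyperplane : (\dim H).+1 = \dim U.
Proof.
rewrite -(limg_ker_dim (linfun (col j)) U) -addn1; congr (_ + _)%N.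
apply/eqP; rewrite eqn_leq (dimv_mx_le _) lt0n dimv_eq0 andbT; apply/eqP => img0.
by have := memv_img (linfun (col j)) x0U; rewrite img0 memv0 lfunE mx11_eq0 mxE x0j oner_eq0.
Qed.

Lemma sub_hyperplane y : y \in U -> y - y 0 j *: x0 \in H.
Proof. by move=> yU; rewrite mem_hyperplane rpredB ?rpredZ //= !mxE x0j mulr1 subrr. Qed.

Lemma hyperplane_stab u : u \in W -> (forall h, h \in H -> (h *m u) 0 j = 0) ->
  forall y, y \in U -> y *m u \in H.
Proof.
move=> uW uH.
have stabH h : h \in H -> h *m u \in H.
  move=> hH; rewrite mem_hyperplane uH // eqxx andbT stabW //.
  by move: hH; rewrite mem_hyperplane => /andP[].
have x0uH : x0 *m u \in H.
  set c := (x0 *m u) 0 j.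
  have powH m : x0 *m u ^+ m - c ^+ m *: x0 \in H.
    elim: m => [|m IHm]; first by rewrite expr0 mulmx1 scale1r subrr mem0v.
    have -> : x0 *m u ^+ m.+1 - c ^+ m.+1 *: x0 =
        (x0 *m u ^+ m - c ^+ m *: x0) *m u + c ^+ m *: (x0 *m u - c *: x0).
      by rewrite exprSr -mulmxE mulmxA mulmxBl -scalemxAl scalerBr scalerA -exprSr addrA subrK.
    by rewrite rpredD ?rpredZ ?stabH ?sub_hyperplane ?stabW.
  have [N uN] := nilW uW.
  have := powH N; rewrite uN mulmx0 sub0r rpredN mem_hyperplane mxE x0j mulr1.
  case/andP=> _; rewrite expf_eq0 => /andP[_ /eqP c0].
  by rewrite mem_hyperplane stabW //=; apply/eqP.
move=> y yU; rewrite -(subrK (y 0 j *: x0) y) mulmxDl -scalemxAl.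
by rewrite rpredD ?rpredZ // stabH ?sub_hyperplane.
Qed.

Lemma annv_hyperplane_mul v y : v \in annv H -> y \in U -> y *m v = y 0 j *: (x0 *m v).
Proof.
move=> /annvP vH yU.
by rewrite -{1}(subrK (y 0 j *: x0) y) mulmxDl vH ?sub_hyperplane // add0r scalemxAl.
Qed.

Lemma mulmx_exprD_annv_hyperplane u v y m : u \in W -> v \in W -> v \in annv H -> y \in U ->
  y *m (u + v) ^+ m =
  y *m u ^+ m + \sum_(i < m) (y *m (u + v) ^+ i) 0 j *: (x0 *m v *m u ^+ (m - i.+1)).
Proof.
move=> uW vW vH yU; elim: m => [|m IHm]; first by rewrite big_ord0 addr0 !expr0.
have yuvU : y *m (u + v) ^+ m \in U by apply: stab_mulmxX => // x; apply/stabW/memvD.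
rewrite exprSr -mulmxE mulmxA mulmxDr (annv_hyperplane_mul vH yuvU) {1}IHm mulmxDl mulmx_suml.
rewrite big_ord_recr /= subnn expr0 mulmx1 exprSr -mulmxE mulmxA -addrA; congr (_ + (_ + _)).
by apply: eq_bigr => i _; rewrite -scalemxAl -(mulmxA (x0 *m v)) mulmxE -exprSr (subnSK (ltn_ord i)).
Qed.

(* (x0 v u)_j is the trace of v u on U.  The usual proof that it vanishes uses traces of powers
   of u + t v and breaks down in characteristic 2; here the nilpotency of u + v and of u enters
   through the recursion of finsupp_conv_recursion_eq0 instead. *)
Lemma annv_hyperplane_orth u v : u \in W -> v \in W -> v \in annv H ->
  (x0 *m v *m u) 0 j = 0.
Proof.
move=> uW vW vH; set w := x0 *m v.
have wU : w \in U by apply: stabW.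
have [Na uvN] := mx_nilpotentP (nilW (memvD uW vW)).
have [Nh uN] := mx_nilpotentP (nilW uW).
pose a m := (w *m (u + v) ^+ m) 0 j; pose h m := (w *m u ^+ m) 0 j.
have := @finsupp_conv_recursion_eq0 F a h (maxn Na Nh) _ _ _ 1%N; rewrite /h expr1; apply.
- by move=> m; rewrite geq_max => /andP[/uvN uv0 _]; rewrite /a uv0 mulmx0 mxE.
- by move=> m; rewrite geq_max => /andP[_ /uN u0]; rewrite /h u0 mulmx0 mxE.
move=> m; rewrite /a (mulmx_exprD_annv_hyperplane m uW vW vH wU) mxE summxE.
by congr (_ + _); apply: eq_bigr => i _; rewrite mxE.
Qed.

Lemma lker_LzP u : reflect (forall h, h \in H -> (h *m u) 0 j = 0) (u \in lker Lz).
Proof.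
rewrite memv_ker lfunE /= trmx_eq0; apply: (iffP (vbasis_mx_mul_eq0 _ _)) => hu0 h /hu0.
  by move/eqP; rewrite mx11_eq0 mulmx_col_mxE => /eqP.
by rewrite -mulmx_col_mxE => hu_j0; apply/eqP; rewrite mx11_eq0 hu_j0.
Qed.

Lemma hyperplane_step : exists (H' : {vspace 'rV[F]_n}) (W1 : {vspace 'M[F]_n}),
  [/\ (\dim H').+1 = \dim U, (W1 <= W)%VS,
      (forall u y, u \in W1 -> y \in H' -> y *m u \in H') &
      (\dim W + \dim (W1 :&: annv H') <= \dim W1 + \dim H' + \dim (W :&: annv U))%N].
Proof.
(* Ly v is the coordinate vector of x0 v in the basis of H. *)
have [R HR] := vbasis_mx_rinv H.
pose Ly := linfun (mulmxr R \o mulmx x0).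
pose W1 := (W :&: lker Lz)%VS; pose W2 := (W1 :&: annv H)%VS.
have stabW1 u y : u \in W1 -> y \in U -> y *m u \in H.
  by rewrite memv_cap => /andP[uW /lker_LzP uH]; apply: hyperplane_stab.
exists H, W1; split; [exact: dim_hyperplane | exact: capvSl | | ].
  by move=> u y uW1; rewrite mem_hyperplane => /andP[yU _]; apply: stabW1.
have W2P v : v \in W2 -> [/\ v \in W, v \in W1 & v \in annv H].
  by rewrite /W2 memv_cap => /andP[vW1 vH]; split => //; move: vW1; rewrite /W1 memv_cap => /andP[].
have ker_Ly : (W2 :&: lker Ly <= W :&: annv U)%VS.
  apply/subvP => v; rewrite memv_cap memv_ker lfunE /= => /andP[/W2P[vW vW1 vH] /eqP x0vR].
  have x0v0 : x0 *m v = 0 by rewrite -(vbasis_mx_rinvK HR (stabW1 v x0 vW1 x0U)) x0vR mul0mx.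
  by rewrite memv_cap vW; apply/annvP => y yU; rewrite annv_hyperplane_mul // x0v0 scaler0.
have orth : (\dim (Ly @: W2) + \dim (Lz @: W) <= \dim H)%N.
  apply: (dimv_orth_le (unitmx1 _ _)) => _ _ /memv_imgP[v /W2P[vW vW1 vH] ->] /memv_imgP[u uW ->].
  rewrite /bform mulmx1 !lfunE /= trmxK mulmxA (vbasis_mx_rinvK HR) ?stabW1 //.
  by rewrite mulmx_col_mxE annv_hyperplane_orth.
have dW : (\dim W1 + \dim (Lz @: W) = \dim W)%N := limg_ker_dim Lz W.
have dW2 : (\dim (W2 :&: lker Ly) + \dim (Ly @: W2) = \dim W2)%N := limg_ker_dim Ly W2.
by move: orth dW dW2 (dimvS ker_Ly); rewrite -/W1 -/W2; lia.
Qed.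

End HyperplaneStep.

Lemma vspace_neq0_coord1 U : U != 0%VS -> exists x0 (j : 'I_n), x0 \in U /\ x0 0 j = 1.
Proof.
move=> U0; have y0 : vpick U != 0 by rewrite vpick0.
have [j yj] : exists j, vpick U 0 j != 0.
  apply/existsP; apply: contraR y0 => /existsPn yj; apply/eqP/rowP => j.
  by rewrite mxE; apply/eqP/negbNE.
by exists ((vpick U 0 j)^-1 *: vpick U), j; rewrite memvZ ?memv_pick // mxE mulVf.
Qed.

Lemma dim_nil_stab_le U W :
  (forall u, u \in W -> mx_nilpotent u) -> (forall u y, u \in W -> y \in U -> y *m u \in U) ->
  (\dim W <= 'C(\dim U, 2) + \dim (W :&: annv U))%N.
Proof.
move dimU : (\dim U) => d; elim: d U W dimU => [|d IHd] U W dimU nilW stabW.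
  rewrite bin0n add0n dimvS // subv_cap subvv; apply/subvP => u _; apply/annvP => y.
  by move: dimU => /eqP; rewrite dimv_eq0 => /eqP ->; rewrite memv0 => /eqP ->; rewrite mul0mx.
have [|x0 [j [x0U x0j]]] := @vspace_neq0_coord1 U; first by rewrite -dimv_eq0 dimU.
have [H [W1 [dimH sW1 stabW1 dimW]]] := hyperplane_step nilW stabW x0U x0j.
have /IHd : \dim H = d by apply: succn_inj; rewrite dimH.
move=> /(_ W1 (fun u uW1 => nilW u (subvP sW1 u uW1)) stabW1).
by move: dimW dimH dimU; rewrite binS bin1; lia.
Qed.

End NilpotentStabilizer.

Section SymmetricMatrices.
Variable F : fieldType.

Lemma sym_mx_eq0 m (S : 'M[F]_(1 + m)) : S^T = S ->
  ulsubmx S = 0 -> ursubmx S = 0 -> drsubmx S = 0 -> S = 0.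
Proof.
move=> symS ul0 ur0 dr0.
by rewrite -[S]submxK ul0 ur0 dr0 -[dlsubmx S]trmxK trmx_dlsub symS ur0 trmx0 block_mx0.
Qed.

Lemma usubmx_is_linear m n : linear (@usubmx F 1 m n).
Proof. by move=> a A B; apply/matrixP => i k; rewrite !mxE. Qed.

Lemma ursubmx_is_linear m : linear (@ursubmx F 1 m 1 m).
Proof. by move=> a A B; apply/matrixP => i k; rewrite !mxE. Qed.

Lemma drsubmx_is_linear m : linear (@drsubmx F 1 m 1 m).
Proof. by move=> a A B; apply/matrixP => i k; rewrite !mxE. Qed.

Lemma dim_sym_mx_le m (Z : {vspace 'M[F]_m}) :
  (forall S, S \in Z -> S^T = S) -> (\dim Z <= 'C(m.+1, 2))%N.
Proof.
elim: m Z => [|m IHm] Z symZ; first by rewrite (leq_trans (dimv_mx_le Z)).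
have [f1 f1E] := hom_of_linear (@usubmx_is_linear m (1 + m)).
have [f2 f2E] := hom_of_linear (@drsubmx_is_linear m).
have ker0 : ((Z :&: lker f1) :&: lker f2 = 0)%VS.
  apply/vspaceP => S; rewrite !memv_cap !memv_ker f1E f2E memv0.
  apply/idP/idP => [/andP[/andP[/symZ symS /eqP u0] /eqP dr0] | /eqP->]; last first.
    by rewrite mem0v -f1E -f2E !linear0 !eqxx.
  by apply/eqP/sym_mx_eq0; rewrite // /ulsubmx /ursubmx u0 linear0.
have symZ2 S : S \in (f2 @: (Z :&: lker f1))%VS -> S^T = S.
  by case/memv_imgP=> S'; rewrite memv_cap => /andP[/symZ symS' _] ->; rewrite f2E trmx_drsub symS'.
rewrite -(limg_ker_dim f1) -(limg_dim_eq ker0) binS bin1 leq_add ?IHm //.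
by rewrite (leq_trans (dimv_mx_le _)) ?mul1n.
Qed.

Lemma dim_alt_mx_le m (Z : {vspace 'M[F]_m}) :
  (forall S, S \in Z -> S^T = S /\ forall i, S i i = 0) -> (\dim Z <= 'C(m, 2))%N.
Proof.
elim: m Z => [|m IHm] Z altZ; first by rewrite (leq_trans (dimv_mx_le Z)).
have [f1 f1E] := hom_of_linear (@ursubmx_is_linear m).
have [f2 f2E] := hom_of_linear (@drsubmx_is_linear m).
have ker0 : ((Z :&: lker f1) :&: lker f2 = 0)%VS.
  apply/vspaceP => S; rewrite !memv_cap !memv_ker f1E f2E memv0.
  apply/idP/idP => [/andP[/andP[/altZ[symS diagS] /eqP ur0] /eqP dr0] | /eqP->]; last first.
    by rewrite mem0v -f1E -f2E !linear0 !eqxx.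
  apply/eqP/sym_mx_eq0 => //; apply/matrixP => i k.
  by rewrite !ord1 !mxE diagS.
have altZ2 S : S \in (f2 @: (Z :&: lker f1))%VS -> S^T = S /\ forall i, S i i = 0.
  case/memv_imgP=> S'; rewrite memv_cap => /andP[/altZ[symS' diagS'] _] ->.
  by rewrite f2E trmx_drsub symS'; split=> // i; rewrite !mxE diagS'.
rewrite -(limg_ker_dim f1) -(limg_dim_eq ker0) binS bin1 leq_add ?IHm //.
by rewrite (leq_trans (dimv_mx_le _)) ?mul1n.
Qed.

End SymmetricMatrices.

Lemma sym_bound_arith nu n : (nu + nu <= n)%N ->
  ('C(nu, 2) + (n - nu - nu) * nu + 'C(nu.+1, 2))%N = (nu * (n - nu))%N.
Proof.
move=> le_n; have := mul_bin_diag nu 1; rewrite bin1 binS bin1.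
by case: nu le_n => [|k] /=; nia.
Qed.

Lemma alt_bound_arith nu n : (nu + nu <= n)%N ->
  ('C(nu, 2) + (n - nu - nu) * nu + 'C(nu, 2))%N = (nu * (n - nu - 1))%N.
Proof.
move=> le_n; have := mul_bin_diag nu 1; rewrite bin1.
by case: nu le_n => [|k] /=; nia.
Qed.

Lemma dim_annv_quotient_le (F : fieldType) n (P Q : {vspace 'rV[F]_n}) (X : {vspace 'M[F]_n}) :
    (Q <= P)%VS -> (forall u y, u \in X -> y \in P -> y *m u \in Q) ->
  (\dim (X :&: annv Q) <= (\dim P - \dim Q) * \dim Q + \dim (X :&: annv P))%N.
Proof.
move=> sQP XPQ; set G := (P :\: Q)%VS.
have dimG : \dim G = (\dim P - \dim Q)%N.
  by rewrite -(dimv_cap_compl P Q) (capv_idPr sQP) addKn.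
have [t tE] : {t : 'Hom('M[F]_n, 'M[F]_(\dim G, \dim Q)) |
    t =1 fun u => \matrix_(a, i) coord (vbasis Q) i ((vbasis G)`_a *m u)}.
  by apply: hom_of_linear => c u v; apply/matrixP => a i; rewrite !mxE mulmxDr -scalemxAr linearP.
have ker_t : ((X :&: annv Q) :&: lker t <= X :&: annv P)%VS.
  apply/subvP => u; rewrite !memv_cap [u \in lker t]memv_ker tE.
  case/andP=> /andP[uX /annvP uQ] /eqP t0.
  rewrite uX; apply/annvP => y; rewrite -(addv_diff_cap P Q) (capv_idPr sQP).
  case/memv_addP=> g gG [q qQ ->]; rewrite mulmxDl (uQ q qQ) addr0.
  rewrite (coord_vbasis gG) mulmx_suml big1 // => a _.
  have GaQ : (vbasis G)`_a *m u \in Q.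
    by apply: XPQ => //; apply: subvP (diffvSl P Q) _ (vbasis_nth_mem a).
  rewrite -scalemxAl (coord_vbasis GaQ) big1 ?scaler0 // => i _.
  by have /matrixP/(_ a i) := t0; rewrite !mxE => ->; rewrite scale0r.
rewrite -(limg_ker_dim t) addnC leq_add ?dimvS //.
by rewrite -dimG (leq_trans (dimv_mx_le _)).
Qed.

Section GramMatrices.
Variables (F : fieldType) (n : nat) (B : 'M[F]_n).
Hypotheses (symB : B^T = B) (unitB : B \in unitmx).
Implicit Types (P : {vspace 'rV[F]_n}) (X : {vspace 'M[F]_n}).

(* Y is the space of Gram matrices of (x, y) |-> b(x, y u), u in X, on a basis of P^C. *)
Lemma Sb_annv_gram P X : (forall u, u \in X -> in_Sb B u) -> (X <= annv P)%VS ->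
  exists m (Y : {vspace 'M[F]_m}), [/\ m = (n - \dim P)%N, \dim Y = \dim X &
    forall S, S \in Y -> exists2 u, u \in X & S^T = S /\ (in_Ab B u -> forall i, S i i = 0)].
Proof.
move=> SbX XP; set C := (P^C)%VS; set Cb := vbasis C.
have [g gE] : {g : 'Hom('M[F]_n, 'M[F]_(\dim C)) |
    g =1 fun u => \matrix_(i, k) bform B Cb`_i (Cb`_k *m u)}.
  apply: hom_of_linear => c u v; apply/matrixP => i k.
  by rewrite !mxE mulmxDr -scalemxAr bformDr bformZr.

exists (\dim C), (g @: X)%VS; split.
- by rewrite dimv_compl dimvf /dim /= mul1n.
- apply: limg_dim_eq; apply/eqP; rewrite -subv0; apply/subvP => u.
  rewrite memv_cap memv_ker memv0 => /andP[uX /eqP g0].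
  have /annvP uP := subvP XP u uX.
  have gram0 (i k : 'I_(\dim C)) : bform B Cb`_i (Cb`_k *m u) = 0.
    by have := congr1 (fun M : 'M[F]_(\dim C) => M i k) g0; rewrite gE !mxE.
  have PC y : y \in (P + C)%VS by rewrite addv_complf memvf.
  apply/eqP/row_matrixP => r; rewrite row0 rowE; apply: (bform_nondeg unitB) => x.
  case/memv_addP: (PC (delta_mx 0 r)) => p pP [c cC ->]; rewrite mulmxDl (uP p pP) add0r.
  case/memv_addP: (PC x) => p' p'P [c' c'C ->].
  rewrite bformDl -(Sb_adj symB _ _ (SbX u uX)) (uP p' p'P) bform0l add0r.
  rewrite (coord_vbasis cC) mulmx_suml bform_sumr big1 // => k _.
  rewrite -scalemxAl bformZr (coord_vbasis c'C) bform_suml big1 ?mulr0 // => i _.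
  by rewrite bformZl gram0 mulr0.
- move=> S /memv_imgP[u uX ->]; exists u => //; split.
    by apply/matrixP => i k; rewrite mxE !gE !mxE; apply: SbX.
  by move=> altu i; rewrite gE mxE altu.
Qed.

Lemma dim_Sb_annv_le P X : (forall u, u \in X -> in_Sb B u) -> (X <= annv P)%VS ->
  (\dim X <= 'C((n - \dim P).+1, 2))%N.
Proof.
move=> SbX XP; have [m [Y [mE <- gramY]]] := Sb_annv_gram SbX XP; subst m.
by apply: dim_sym_mx_le => S /gramY[u _ []].
Qed.

Lemma dim_Ab_annv_le P X : 2%N \in [pchar F] ->
  (forall u, u \in X -> in_Ab B u) -> (X <= annv P)%VS -> (\dim X <= 'C(n - \dim P, 2))%N.
Proof.
move=> char2 AbX XP.
have [m [Y [mE <- gramY]]] := Sb_annv_gram (fun u uX => Ab_Sb char2 (AbX u uX)) XP.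
subst m.
by apply: dim_alt_mx_le => S /gramY[u /AbX altu [symS diagS]]; split=> //; apply: diagS.
Qed.

End GramMatrices.

Section IsotropicKernel.
Variables (F : fieldType) (n : nat) (B : 'M[F]_n) (K : {vspace 'rV[F]_n}).
Hypotheses (symB : B^T = B) (unitB : B \in unitmx).
Hypothesis KE : forall x, (x \in K) = (qform B x == 0).
Hypothesis K_sing : forall x y, x \in K -> y \in K -> bform B x y = 0.

Local Notation nu := (\dim K).
Local Notation Kperp := (orthv B K).

Lemma K_sub_Kperp : (K <= Kperp)%VS.
Proof. by apply/subvP => x xK; apply/orthvP => y; apply: K_sing. Qed.

Lemma dimK_double_le : (nu + nu <= n)%N.
Proof.
by have := dimvS K_sub_Kperp; rewrite dim_orthv //; have := dimv_mx_le K; rewrite mul1n; lia.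
Qed.

Lemma dim_Kperp_compl : (n - \dim Kperp)%N = nu.
Proof. by rewrite dim_orthv // subKn //; have := dimK_double_le; lia. Qed.

Lemma Kperp_mulmxX_mem u y k : in_Sb B u -> mx_nilpotent u -> y \in Kperp ->
  (0 < k)%N -> y *m u ^+ k \in K.
Proof.
move=> Sb_u /mx_nilpotentP[N uN] /orthvP yK k_gt0.
suff ind d : forall k, (N <= k + d)%N -> (0 < k)%N -> y *m u ^+ k \in K.
  by apply: (ind N); rewrite ?leq_addl.
elim: d => [|d IHd] {k_gt0}k le_N k_gt0; first by rewrite uN ?mulmx0 ?mem0v // -[k]addn0.
rewrite KE /qform (Sb_adjX symB _ _ _ Sb_u) -mulmxA mulmxE -exprD yK // IHd //; lia.
Qed.

Lemma dim_nil_Sb_le (W : {vspace 'M[F]_n}) : (forall u, u \in W -> in_Sb B u /\ mx_nilpotent u) ->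
  (\dim W <= 'C(nu, 2) + (n - nu - nu) * nu + \dim (W :&: annv Kperp))%N.
Proof.
move=> SbW.
have W_Kperp u y : u \in W -> y \in Kperp -> y *m u \in K.
  by move=> /SbW[Sb_u nil_u] yK; rewrite -[u]expr1; apply: Kperp_mulmxX_mem.
have stabK u y : u \in W -> y \in K -> y *m u \in K.
  by move=> uW yK; apply/W_Kperp/(subvP K_sub_Kperp).
have := dim_nil_stab_le (fun u uW => (SbW u uW).2) stabK.
have := dim_annv_quotient_le K_sub_Kperp W_Kperp; rewrite dim_orthv //.
by move=> le_annK /leq_trans->; rewrite // -addnA leq_add2l.
Qed.

End IsotropicKernel.

Theorem proposition5p2 (F : fieldType) (n : nat)
  (HF : 2%N \in [pchar F])
  (B : 'M[F]_n) (HBsym : B^T = B) (HBnd : B \in unitmx)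
  (K : {vspace 'rV[F]_n})
  (HK : forall x : 'rV[F]_n, (x \in K) = (qform B x == 0))
  (HKsing : forall x y : 'rV[F]_n, x \in K -> y \in K -> bform B x y = 0) :
  let nu := \dim K in
  (forall W : {vspace 'M[F]_n},
     (forall u, u \in W -> in_Sb B u /\ mx_nilpotent u) ->
     (\dim W <= nu * (n - nu))%N)
  /\
  (forall W : {vspace 'M[F]_n},
     (forall u, u \in W -> in_Ab B u /\ mx_nilpotent u) ->
     (\dim W <= nu * (n - nu - 1))%N).
Proof.
move=> nu; have nu_le := dimK_double_le HBnd HKsing.
have Kperp_compl : (n - \dim (orthv B K))%N = nu := dim_Kperp_compl HBnd HKsing.
split=> W HW.
  have SbW u : u \in W -> in_Sb B u /\ mx_nilpotent u by case/HW.
  rewrite -sym_bound_arith // (leq_trans (dim_nil_Sb_le HBsym HBnd HK HKsing SbW)) //.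
  rewrite leq_add2l -Kperp_compl; apply: (dim_Sb_annv_le HBsym HBnd _ (capvSr _ _)).
  by move=> u /memv_capP[/SbW[]].
have SbW u : u \in W -> in_Sb B u /\ mx_nilpotent u.
  by case/HW=> Ab_u nil_u; split=> //; apply: Ab_Sb.
rewrite -alt_bound_arith // (leq_trans (dim_nil_Sb_le HBsym HBnd HK HKsing SbW)) //.
rewrite leq_add2l -Kperp_compl; apply: (dim_Ab_annv_le HBsym HBnd HF _ (capvSr _ _)).
by move=> u /memv_capP[/HW[]].
Qed.
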